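(* Let $\mathbb X,\mathbb Y_1,\mathbb Y_2,\mathbb X^\sharp,\mathbb Y_1^\sharp,\mathbb Y_2^\sharp$ be sets with couplings $c:\mathbb X\times\mathbb X^\sharp\to\overline{\mathbb R}$, $d_1:\mathbb Y_1\times\mathbb Y_1^\sharp\to\overline{\mathbb R}$, $d_2:\mathbb Y_2\times\mathbb Y_2^\sharp\to\overline{\mathbb R}$, and let $\phi:\mathbb Y_1\times\mathbb X\times\mathbb Y_2\to\overline{\mathbb R}$. Define $\phi^\sharp:\mathbb Y_1^\sharp\times\mathbb X^\sharp\times\mathbb Y_2^\sharp\to\overline{\mathbb R}$ by $$\phi^\sharp(y_1^\sharp,x^\sharp,y_2^\sharp)=\sup_{(y_1,x,y_2)\in\mathbb Y_1\times\mathbb X\times\mathbb Y_2}\Big(c(x,x^\sharp)\mathbin{\underset{\cdot}{+}} d_1(y_1,y_1^\sharp)\mathbin{\underset{\cdot}{+}} d_2(y_2,y_2^\sharp)\mathbin{\underset{\cdot}{+}}\big(-\phi(y_1,x,y_2)\big)\Big).$$ Then for all $f:\mathbb X\to\overline{\mathbb R}$, $g_1:\mathbb Y_1\to\overline{\mathbb R}$, $g_2:\mathbb Y_2\to\overline{\mathbb R}$: if $f(x)\ge (g_1\square^{\phi} g_2)(x)$ for all $x\in\mathbb X$, then $f^{c}(x^\sharp)\le\big(g_1^{-d_1}\square^{\phi^\sharp}g_2^{-d_2}\big)(x^\sharp)$ for all $x^\sharp\in\mathbb X^\sharp$.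
   Context: $\overline{\mathbb R}=[-\infty,+\infty]$. The Moreau lower addition $\mathbin{\underset{\cdot}{+}}$ is usual addition extended by $(+\infty)\mathbin{\underset{\cdot}{+}}(-\infty)=(-\infty)\mathbin{\underset{\cdot}{+}}(+\infty)=-\infty$; the Moreau upper addition $\mathbin{\overset{\cdot}{+}}$ is usual addition extended by $(+\infty)\mathbin{\overset{\cdot}{+}}(-\infty)=(-\infty)\mathbin{\overset{\cdot}{+}}(+\infty)=+\infty$. Generalized inf-convolution: for sets $A,B,C$, a function $\psi:A\times B\times C\to\overline{\mathbb R}$ and $h_1:A\to\overline{\mathbb R}$, $h_2:C\to\overline{\mathbb R}$, $(h_1\square^{\psi}h_2)(b)=\inf_{a\in A,\,z\in C}\big(h_1(a)\mathbin{\overset{\cdot}{+}}\psi(a,b,z)\mathbin{\overset{\cdot}{+}} h_2(z)\big)$. Conjugates: $f^{c}(x^\sharp)=\sup_{x}\big(c(x,x^\sharp)\mathbin{\underset{\cdot}{+}}(-f(x))\big)$ and $g_i^{-d_i}(y_i^\sharp)=\sup_{y_i}\big((-d_i(y_i,y_i^\sharp))\mathbin{\underset{\cdot}{+}}(-g_i(y_i))\big)$. *)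

From mathcomp Require Import all_boot all_order all_algebra.
From mathcomp Require Import all_classical all_reals ereal.
Set Implicit Arguments. Unset Strict Implicit. Unset Printing Implicit Defensive.
Import Order.TTheory GRing.Theory Num.Theory.
Local Open Scope classical_set_scope.
Local Open Scope ereal_scope.

(* Moreau lower addition  = mathcomp's [adde]      ((x + y)%E,  +oo + -oo = -oo)
   Moreau upper addition  = mathcomp's [dual_adde] ((x + y)%dE, +oo + -oo = +oo) *)
Definition lower_add {R : realType} (a b : \bar R) : \bar R := (a + b)%E.
Definition upper_add {R : realType} (a b : \bar R) : \bar R := (a + b)%dE.

Lemma lower_add_check {R : realType} : lower_add (+oo : \bar R) -oo = -oo.
Proof. by []. Qed.
Lemma upper_add_check {R : realType} : upper_add (+oo : \bar R) -oo = +oo.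
Proof. by []. Qed.

Definition infconv {R : realType} {A B C : Type}
  (psi : A -> B -> C -> \bar R) (h1 : A -> \bar R) (h2 : C -> \bar R) (b : B)
  : \bar R :=
  ereal_inf [set t | exists a z, t = upper_add (upper_add (h1 a) (psi a b z)) (h2 z)].

Definition cconj {R : realType} {X Xs : Type} (c : X -> Xs -> \bar R)
  (f : X -> \bar R) (xs : Xs) : \bar R :=
  ereal_sup (range (fun x => lower_add (c x xs) (- f x))).

Definition negconj {R : realType} {Y Ys : Type} (d : Y -> Ys -> \bar R)
  (g : Y -> \bar R) (ys : Ys) : \bar R :=
  ereal_sup (range (fun y => lower_add (- d y ys) (- g y))).

Definition phisharp {R : realType} {X Y1 Y2 Xs Y1s Y2s : Type}
  (c : X -> Xs -> \bar R) (d1 : Y1 -> Y1s -> \bar R) (d2 : Y2 -> Y2s -> \bar R)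
  (phi : Y1 -> X -> Y2 -> \bar R) (y1s : Y1s) (xs : Xs) (y2s : Y2s) : \bar R :=
  ereal_sup [set t | exists y1 x y2,
    t = lower_add (lower_add (lower_add (c x xs) (d1 y1 y1s)) (d2 y2 y2s))
                  (- phi y1 x y2)].

From mathcomp Require Import all_boot all_order all_algebra.
From mathcomp Require Import all_classical all_reals ereal.
From mathcomp Require Import lra.
Import Order.TTheory GRing.Theory Num.Theory DualAddTheory.

(* For fixed [x], [y1#], [y2#] the hypothesis gives
   [-f x <= sup_(y1, y2) (-g1 y1 - phi(y1, x, y2) - g2 y2)], so it suffices to
   bound [c(x, x#) - g1 y1 - phi(y1, x, y2) - g2 y2] for each [y1], [y2].
   Inserting the cancelling pairs [-d1(y1, y1#)], [d1(y1, y1#)] and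
   [-d2(y2, y2#)], [d2(y2, y2#)] regroups this lower sum, up to an upper sum,
   into the three terms defining [g1^{-d1}(y1#)], [phi#(y1#, x#, y2#)] and
   [g2^{-d2}(y2#)]: the lower addition on the left and the upper addition on
   the right make the regrouping valid even when some terms are infinite. *)
Local Open Scope ereal_scope.

Section ExtendedRealArithmetic.
Context {R : realType}.
Implicit Types (a b x y d : \bar R) (S : set (\bar R)).

Lemma adde_ereal_sup_le a S b :
  (forall s, S s -> a + s <= b) -> a + ereal_sup S <= b.
Proof.
case: a => [r||] aSb; last by rewrite leNye.
- have supSb : ereal_sup S <= b - r%:E.
    by apply: ge_ereal_sup => s Ss; rewrite leeBrDl // aSb.
  by rewrite -leeBrDl // leeD2l.
- have [->|supS_gtNy] := eqVneq (ereal_sup S) -oo; first by rewrite leNye.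
  have [s Ss Ny_lt_s] : exists2 s, S s & -oo < s by apply: ereal_sup_gt; rewrite ltNye.
  have := aSb s Ss; rewrite addye ?gt_eqF // leye_eq => /eqP->.
  exact: leey.
Qed.

Lemma adde_oppe_ereal_inf_le a S b :
  (forall s, S s -> a - s <= b) -> a - ereal_inf S <= b.
Proof.
by move=> aSb; rewrite -ereal_supN; apply: adde_ereal_sup_le => _ [s Ss <-]; exact: aSb.
Qed.

(* If [d] is infinite, one of [-d + x], [y + d] is [-oo] and the other [+oo]
   (unless [x] or [y] already is [-oo]); the upper addition resolves this
   clash to [+oo]. *)
Lemma adde_le_dual_adde_insert x y d : x + y <= ((- d + x)%E + (y + d)%E)%dE.
Proof.
by case: x => [x||]; case: y => [y||]; case: d => [d||];
  rewrite /= ?leey ?leNye ?lee_fin //; lra.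
Qed.

Lemma adde_le_dual_adde_insert2 c a p b d1 d2 :
  c + a + p + b <=
  ((- d1 + a)%E + (c + d1 + d2 + p)%E + (- d2 + b)%E)%dE.
Proof.
have -> : c + a + p + b = a + (b + (c + p)).
  by rewrite (addeC c) -!addeA; congr (a + _); rewrite (addeC p) addeCA.
apply: le_trans (adde_le_dual_adde_insert _ _ d1) _.
rewrite -daddeA; apply: lee_dD2l.
have -> : b + (c + p) + d1 = b + (c + d1 + p) by rewrite -addeA addeAC.
apply: le_trans (adde_le_dual_adde_insert b _ d2) _.
by rewrite daddeC addeAC.
Qed.

Lemma oppe_dual_adde3 a b e : - (a + b + e)%dE = - a + - b + - e.
Proof. by rewrite !dual_addeE !oppeK. Qed.

End ExtendedRealArithmetic.

Lemma negconj_ge {R : realType} {Y Ys : Type} (d : Y -> Ys -> \bar R)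
    (g : Y -> \bar R) y ys :
  - d y ys + - g y <= negconj d g ys.
Proof. by apply: ereal_sup_ubound; exists y. Qed.

Lemma phisharp_ge {R : realType} {X Y1 Y2 Xs Y1s Y2s : Type}
    (c : X -> Xs -> \bar R) (d1 : Y1 -> Y1s -> \bar R) (d2 : Y2 -> Y2s -> \bar R)
    (phi : Y1 -> X -> Y2 -> \bar R) y1 x y2 y1s xs y2s :
  c x xs + d1 y1 y1s + d2 y2 y2s + - phi y1 x y2 <= phisharp c d1 d2 phi y1s xs y2s.
Proof. by apply: ereal_sup_ubound; exists y1, x, y2. Qed.

Theorem proposition1 (R : realType) (X Y1 Y2 Xs Y1s Y2s : Type)
  (c : X -> Xs -> \bar R) (d1 : Y1 -> Y1s -> \bar R) (d2 : Y2 -> Y2s -> \bar R)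
  (phi : Y1 -> X -> Y2 -> \bar R)
  (f : X -> \bar R) (g1 : Y1 -> \bar R) (g2 : Y2 -> \bar R) :
  (forall x : X, infconv phi g1 g2 x <= f x) ->
  forall xs : Xs,
    cconj c f xs <= infconv (phisharp c d1 d2 phi) (negconj d1 g1) (negconj d2 g2) xs.
Proof.
move=> f_ge xs; apply: ge_ereal_sup => _ [x _ <-].
apply: le_ereal_inf_tmp => _ [y1s [y2s ->]].
rewrite /lower_add /upper_add.
have Nf_le : - f x <= - infconv phi g1 g2 x by rewrite leeN2.
apply: le_trans (leeD2l _ Nf_le) _.
apply: adde_oppe_ereal_inf_le => _ [y1 [y2 ->]].
rewrite /upper_add oppe_dual_adde3 !addeA.
apply: le_trans (adde_le_dual_adde_insert2 _ _ _ _ (d1 y1 y1s) (d2 y2 y2s)) _.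
by apply: lee_dD; [apply: lee_dD|]; [apply: negconj_ge|apply: phisharp_ge|apply: negconj_ge].
Qed.
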